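(* Let $n\ge2$, $\mathbf i\in\Sigma_n$, $0\le s\le n(n-1)/2$ and $\bullet\in\{D,A\}$. Then there is a canonical injective map $\Psi_\bullet(\mathbf i,s):\mathcal{GP}(\mathbf i)\hookrightarrow\mathcal{GP}(E_\bullet(s)(\mathbf i))$ whose image is exactly the set of rigorous paths $P$ of $G(E_\bullet(s)(\mathbf i))$ such that $P$ does not switch wires at any node lying on $\ell_\bullet$, where $\ell_D:=\ell_{n+1}$ and $\ell_A:=\ell_1$ (wires of $G(E_\bullet(s)(\mathbf i))$). In particular $|\mathcal{GP}(E_\bullet(s)(\mathbf i))|$ equals $|\mathcal{GP}(\mathbf i)|$ plus the number of rigorous paths of $E_\bullet(s)(\mathbf i)$ that switch wires at some node of $\ell_\bullet$.
   Context: $\Sigma_{m+1}$: reduced words of the longest element of $\mathfrak S_{m+1}$ in $s_i=(i,i+1)$, of length $m(m+1)/2$. Extensions: for $\mathbf i=(i_1,\dots,i_M)\in\Sigma_n$ ($M=n(n-1)/2$) and $0\le s\le M$, let $\mathbf i^-(s)=(i_1,\dots,i_{M-s})$, $\mathbf i^+(s)=(i_{M-s+1},\dots,i_M)$; for a word $\mathbf w$, $\mathbf w+1$ adds $1$ to every letter. $E_D(s)(\mathbf i):=\mathbf i^-(s)\,(n,n-1,\dots,1)\,(\mathbf i^+(s)+1)\in\Sigma_{n+1}$ and $E_A(s)(\mathbf i):=(\mathbf i^-(s)+1)\,(1,2,\dots,n)\,\mathbf i^+(s)\in\Sigma_{n+1}$ (concatenations). Wiring diagram $G(\mathbf j)$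 for $\mathbf j\in\Sigma_{m+1}$: $m+1$ wires $\ell_1,\dots,\ell_{m+1}$ run top to bottom through positions $1,\dots,m+1$; at the top $\ell_k$ is in position $k$; the $j$-th node swaps the wires in positions $j_j, j_j+1$; at the bottom $\ell_k$ is in position $m+2-k$ and ends at $L_k$. Rigorous paths: for $k\in[m]$, $G(\mathbf j,k)$ has $\ell_1,\dots,\ell_k$ oriented upward and the rest downward. A rigorous path in $G(\mathbf j,k)$ starts at $L_k$, ends at $L_{k+1}$, moves along wires in their orientation, switches wires only at their crossing node, passes each node at most once, and never passes straight through $\ell_a\cap\ell_b$ while on $\ell_a$ when both are downward with $a>b$ or both upward with $a<b$. $\mathcal{GP}(\mathbf j)$ = set of all rigorous paths (all $k$). *)

From mathcomp Require Import all_boot.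
Set Implicit Arguments. Unset Strict Implicit. Unset Printing Implicit Defensive.

(* Positions and wires are 1-indexed; nodes of a word j are indexed 0 .. size j - 1
   from top to bottom; the node t is the (t+1)-st letter j_t = nth 0 j t. *)

Definition sw (a p : nat) : nat := if p == a then a.+1 else if p == a.+1 then a else p.

(* position of wire l_w just before node t (wire l_w starts at top position w) *)
Definition pos (j : seq nat) (t w : nat) : nat := foldl (fun p a => sw a p) w (take t j).

(* the wire occupying position p just before node t *)
Definition wire_at (j : seq nat) (t p : nat) : nat := foldr (fun a q => sw a q) p (take t j).

Definition nodeL (j : seq nat) (t : nat) : nat := wire_at j t (nth 0 j t).
Definition nodeR (j : seq nat) (t : nat) : nat := wire_at j t (nth 0 j t).+1.
Definition on_node (j : seq nat) (t w : nat) : bool := (w == nodeL j t) || (w == nodeR j t).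
Definition other (j : seq nat) (t w : nat) : nat := if w == nodeL j t then nodeR j t else nodeL j t.

(* Sigma nw j : j is a reduced word of the longest element of S_nw (nw wires):
   letters in [1, nw-1], length nw(nw-1)/2, and the product of the s_{j_t} is w0,
   i.e. wire l_k ends at position nw+1-k for every k. *)
Definition Sigma (nw : nat) (j : seq nat) : bool :=
  [&& size j == (nw * nw.-1) %/ 2,
      all (fun a => 0 < a < nw) j
    & all (fun k => pos j (size j) k == nw.+1 - k) (iota 1 nw)].

Definition wire_nodes (j : seq nat) (w : nat) : seq nat :=
  [seq t <- iota 0 (size j) | on_node j t w].

Definition upward (k w : nat) : bool := w <= k.

Definition next_node (j : seq nat) (k w t : nat) : option nat :=
  if upward k w then ohead (rev [seq u <- wire_nodes j w | u < t])
  else ohead [seq u <- wire_nodes j w | t < u].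

Definition bottom_node (j : seq nat) (w : nat) : option nat :=
  ohead (rev (wire_nodes j w)).

(* A path datum (k, ws, ts): ts = [t_1; ...; t_r] are the nodes passed (in order),
   ws = [w_0; ...; w_r] where w_0 is the wire on which the path starts at L_k,
   and w_i is the wire on which the path leaves node t_i. *)
Definition path_data := (nat * seq nat * seq nat)%type.

Definition pk (P : path_data) : nat := P.1.1.
Definition pws (P : path_data) : seq nat := P.1.2.
Definition pts (P : path_data) : seq nat := P.2.

Definition straight_ok (j : seq nat) (k a t : nat) : bool :=
  let b := other j t a in
  ~~ ((~~ upward k a && ~~ upward k b && (b < a)) || (upward k a && upward k b && (a < b))).

Definition rigorous (nw : nat) (j : seq nat) (P : path_data) : bool :=
  let k := pk P in let ws := pws P in let ts := pts P in
  let r := size ts in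
  [&& 0 < k < nw,
      size ws == r.+1,
      0 < r,
      head 0 ws == k,
      last 0 ws == k.+1,
      bottom_node j k == Some (head 0 ts),
      uniq ts,
      all (fun i =>
             let t := nth 0 ts i in
             let win := nth 0 ws i in
             let wout := nth 0 ws i.+1 in
             [&& on_node j t win, on_node j t wout &
                 (win == wout) ==> straight_ok j k win t]) (iota 0 r),
      all (fun i => next_node j k (nth 0 ws i.+1) (nth 0 ts i) == Some (nth 0 ts i.+1))
          (iota 0 r.-1)
    & next_node j k (last 0 ws) (last 0 ts) == None].

Definition GP (nw : nat) (j : seq nat) := {P : path_data | rigorous nw j P}.

Definition switches_on (j : seq nat) (e : nat) (P : path_data) : bool :=
  has (fun i => (nth 0 (pws P) i != nth 0 (pws P) i.+1) && on_node j (nth 0 (pts P) i) e)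
      (iota 0 (size (pts P))).

Inductive bullet := BD | BA.

Definition ext (b : bullet) (n s : nat) (i : seq nat) : seq nat :=
  let M := size i in
  match b with
  | BD => take (M - s) i ++ rev (iota 1 n) ++ map S (drop (M - s) i)
  | BA => map S (take (M - s) i) ++ iota 1 n ++ drop (M - s) i
  end.

Definition ell (b : bullet) (n : nat) : nat := match b with BD => n.+1 | BA => 1 end.

From mathcomp Require Import all_boot zify.
Set Implicit Arguments. Unset Strict Implicit. Unset Printing Implicit Defensive.

(* The word E_b(s)(i) arises from i by inserting, after its first M - s letters, a block of n
   consecutive nodes, all lying on the new wire l_(n+1) (b = BD) or l_1 (b = BA), the old wires
   l_w being renamed l_w, resp. l_(w+1).  Thus the nodes of G(i) embed order-preservingly into those of
   G(E_b(s)(i)) by skipping the block, crossings and forbidden straight passes correspond, and the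
   block consists exactly of the nodes on the new wire.  A rigorous path of the extension that never
   switches at a node of the new wire never travels along it, so it crosses the whole block straight;
   deleting the block nodes (contraction) yields a rigorous path of G(i).  Conversely every rigorous
   path of G(i) lifts uniquely, which gives the injection and its image. *)

Local Notation wire_after l p := (foldr (fun a q => sw a q) p l).

Section NextIn.
Variable r : rel nat.
Hypothesis r_irr : irreflexive r.
Hypothesis r_trans : transitive r.

Definition next_in (s : seq nat) (x : nat) : option nat := ohead [seq u <- s | r x u].

Lemma next_inP s x z : next_in s x = Some z -> z \in s /\ r x z.
Proof.
rewrite /next_in; case E: [seq u <- s | r x u] => [|y t] //= [<-].
have : y \in [seq u <- s | r x u] by rewrite E mem_head.
by rewrite mem_filter => /andP [].
Qed.

Lemma next_in_filter s x z t : sorted r s ->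
  [seq u <- s | r x u] = z :: t -> [seq u <- s | r z u] = t.
Proof.
elim: s => //= a s IH so; have min_a := order_path_min r_trans so.
case: ifP => [rxa [<- <-]|_ E].
  rewrite r_irr; have /all_filterP -> := min_a.
  by apply/esym/all_filterP; apply: sub_all min_a => y; apply: r_trans.
have : z \in [seq u <- s | r x u] by rewrite E mem_head.
rewrite mem_filter => /andP [_ zs].
have raz : r a z := allP min_a z zs.
rewrite ifF; first exact: IH (path_sorted so) E.
by apply/negP => /(r_trans raz); rewrite r_irr.
Qed.

Lemma next_in_min s x y z : sorted r s -> next_in s x = Some z ->
  y \in s -> r x y -> r y z -> False.
Proof.
rewrite /next_in => so; case E: [seq u <- s | r x u] => [|z' t] //= [<-] ys rxy ryz.
have : y \in [seq u <- s | r x u] by rewrite mem_filter rxy.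
rewrite E inE -(next_in_filter so E) mem_filter => /orP [/eqP eyz|/andP [rzy _]].
  by move: ryz; rewrite eyz r_irr.
by have := r_trans ryz rzy; rewrite r_irr.
Qed.

Lemma next_in_inj s u1 u2 z : (forall x y, x != y -> r x y || r y x) -> sorted r s ->
  u1 \in s -> u2 \in s -> next_in s u1 = Some z -> next_in s u2 = Some z -> u1 = u2.
Proof.
move=> total so u1s u2s N1 N2; apply/eqP/negP => /negP /total /orP [r12|r21].
  exact: next_in_min so N1 u2s r12 (next_inP N2).2.
exact: next_in_min so N2 u1s r21 (next_inP N1).2.
Qed.

Lemma next_in_map (f : nat -> nat) s t : (forall a b, r (f a) (f b) = r a b) ->
  next_in (map f s) (f t) = omap f (next_in s t).
Proof.
move=> f_mono; rewrite /next_in filter_map.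
by rewrite (eq_filter (a2 := r t)) => [|u /=]; [case: [seq u <- s | r t u]|rewrite f_mono].
Qed.

End NextIn.

Inductive skips (nx : nat -> option nat) (X : pred nat) : option nat -> option nat -> Prop :=
| skips_none : skips nx X None None
| skips_stop z : ~~ X z -> skips nx X (Some z) (Some z)
| skips_step z o : X z -> skips nx X (nx z) o -> skips nx X (Some z) o.

Lemma skips_ext nx1 nx2 X o1 o2 : nx1 =1 nx2 -> skips nx1 X o1 o2 -> skips nx2 X o1 o2.
Proof.
move=> E; elim=> [|z nz|z o Xz _ IH]; [exact: skips_none|exact: skips_stop|].
by apply: skips_step; rewrite -?E.
Qed.

Lemma next_in_skips r X s x : irreflexive r -> transitive r -> sorted r s ->
  skips (next_in r s) X (next_in r s x) (next_in r [seq u <- s | ~~ X u] x).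
Proof.
move=> irr tr so.
have -> : next_in r [seq u <- s | ~~ X u] x = ohead [seq u <- [seq u <- s | r x u] | ~~ X u].
  by rewrite /next_in -!filter_predI; congr ohead; apply: eq_filter => u /=; rewrite andbC.
rewrite [next_in r s x]/next_in; move E: [seq u <- s | r x u] => L.
elim: L x E => [|z L IH] x E /=; first exact: skips_none.
case: ifP => [nXz|/negbFE Xz]; first exact: skips_stop.
apply: skips_step => //; rewrite [next_in r s z]/next_in (next_in_filter irr tr so E).
by apply: IH; apply: next_in_filter so E.
Qed.

(* A path on wire [w] of [G(j,k)] meets the nodes of [w] in increasing order when [w] points down and in
   decreasing order when it points up. *)
Definition orient (k w : nat) : rel nat := if upward k w then gtn else ltn.

Definition oriented_nodes (j : seq nat) (k w : nat) : seq nat :=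
  if upward k w then rev (wire_nodes j w) else wire_nodes j w.

Lemma orient_irr k w : irreflexive (orient k w).
Proof. by rewrite /orient; case: ifP => _ x /=; rewrite ltnn. Qed.

Lemma orient_trans k w : transitive (orient k w).
Proof.
by rewrite /orient; case: ifP => _ y x z /= h1 h2; [exact: ltn_trans h2 h1|exact: ltn_trans h2].
Qed.

Lemma orient_total k w x y : x != y -> orient k w x y || orient k w y x.
Proof. by rewrite /orient neq_ltn; case: ifP => _ //=; rewrite orbC. Qed.

Lemma mem_wire_nodes j w t : (t \in wire_nodes j w) = (t < size j) && on_node j t w.
Proof. by rewrite mem_filter mem_iota /= add0n andbC. Qed.

Lemma oriented_sorted j k w : sorted (orient k w) (oriented_nodes j k w).
Proof.
have so : sorted ltn (wire_nodes j w) by apply: sorted_filter; [exact: ltn_trans|exact: iota_ltn_sorted].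
by rewrite /orient /oriented_nodes; case: ifP => _ //; rewrite rev_sorted.
Qed.

Lemma mem_oriented j k w t : (t \in oriented_nodes j k w) = (t \in wire_nodes j w).
Proof. by rewrite /oriented_nodes; case: ifP; rewrite ?mem_rev. Qed.

Lemma next_nodeE j k w t : next_node j k w t = next_in (orient k w) (oriented_nodes j k w) t.
Proof. by rewrite /next_node /next_in /orient /oriented_nodes; case: ifP; rewrite ?filter_rev. Qed.

(* The first node reached from [L_k] is the node following the virtual node [size j] on the upward
   wire [l_k]. *)
Lemma bottom_nodeE j k : bottom_node j k = next_node j k k (size j).
Proof.
rewrite next_nodeE /orient /oriented_nodes /upward leqnn /next_in /bottom_node.
congr ohead; apply/esym/all_filterP/allP => u; rewrite mem_rev mem_wire_nodes.
by case/andP.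
Qed.

Lemma next_node_wire j k w t z : next_node j k w t = Some z -> z \in wire_nodes j w.
Proof. by rewrite next_nodeE => /next_inP [+ _]; rewrite mem_oriented. Qed.

Lemma bottom_node_wire j k z : bottom_node j k = Some z -> z \in wire_nodes j k.
Proof. by rewrite bottom_nodeE => /next_node_wire. Qed.

Lemma next_node_inj j k w u1 u2 z : u1 \in wire_nodes j w -> u2 \in wire_nodes j w ->
  next_node j k w u1 = Some z -> next_node j k w u2 = Some z -> u1 = u2.
Proof.
rewrite -!(mem_oriented j k) !next_nodeE; apply: next_in_inj.
- exact: orient_irr.
- exact: orient_trans.
- exact: orient_total.
- exact: oriented_sorted.
Qed.

Lemma bottom_not_next j k u z : u \in wire_nodes j k ->
  next_node j k k u = Some z -> bottom_node j k = Some z -> False.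
Proof.
move=> uk N B; move: B uk; rewrite bottom_nodeE next_nodeE -(mem_oriented j k) => B uk.
have := next_in_min (@orient_irr k k) (@orient_trans k k) (oriented_sorted j k k) B uk.
apply.
  by rewrite /orient /upward leqnn /=; move: uk; rewrite mem_oriented mem_wire_nodes => /andP [].
by move: N; rewrite next_nodeE => /next_inP [].
Qed.

Lemma node_wires_eq j t a b e : on_node j t a -> on_node j t b -> on_node j t e ->
  a != e -> b != e -> a = b.
Proof. by rewrite /on_node => /orP [] /eqP -> /orP [] /eqP -> /orP [] /eqP ->; rewrite ?eqxx. Qed.

Lemma other_on_node j t a e : on_node j t a -> on_node j t e -> a != e -> other j t a = e.
Proof.
rewrite /on_node /other => /orP [] /eqP -> /orP [] /eqP -> //; rewrite ?eqxx //.
by case: ifP => // /eqP ->; rewrite eqxx.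
Qed.

Lemma sw_bounds N a p : 0 < a < N -> 0 < p <= N -> 0 < sw a p <= N.
Proof. by rewrite /sw; case: eqP => [->|_]; [lia|]; case: eqP => [->|_]; lia. Qed.

Lemma wire_through_bounds N l p : all (fun a => 0 < a < N) l -> 0 < p <= N ->
  0 < wire_after l p <= N.
Proof. by elim: l => //= a l IH /andP [al /IH IHl] /IHl; apply: sw_bounds. Qed.

Lemma on_node_bounds N j t w : all (fun a => 0 < a < N) j -> t < size j ->
  on_node j t w -> 0 < w <= N.
Proof.
move=> letters tj; have /andP [lo hi] : 0 < nth 0 j t < N by apply: (allP letters); exact: mem_nth.
have wt p : 0 < p <= N -> 0 < wire_at j t p <= N.
  by apply: wire_through_bounds; apply/allP => a /mem_take /(allP letters).
by rewrite /on_node => /orP [] /eqP ->; apply: wt; lia.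
Qed.

Definition passage_ok (j : seq nat) (k t win wout : nat) : bool :=
  [&& on_node j t win, on_node j t wout & (win == wout) ==> straight_ok j k win t].

(* [walk_from j k o w ws ts]: a path of [G(j,k)] currently on wire [w], whose next node is [o]
   ([None] = the bottom end of [w]), passes the nodes [ts] leaving them on the wires [ws] and ends at
   [L_(k+1)]. *)
Fixpoint walk_from (j : seq nat) (k : nat) (o : option nat) (w : nat) (ws ts : seq nat)
    {struct ws} : bool :=
  match o, ws, ts with
  | None, [::], [::] => w == k.+1
  | Some t, w' :: ws', t' :: ts' =>
      [&& t' == t, passage_ok j k t w w' & walk_from j k (next_node j k w' t) w' ws' ts']
  | _, _, _ => false
  end.

Lemma walk_from_None j k w ws ts :
  walk_from j k None w ws ts = [&& ws == [::], ts == [::] & w == k.+1].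
Proof. by case: ws => [|? ?]; case: ts. Qed.

Lemma walk_from_cons j k t w w' ws t' ts : walk_from j k (Some t) w (w' :: ws) (t' :: ts) =
  [&& t' == t, passage_ok j k t w w' & walk_from j k (next_node j k w' t) w' ws ts].
Proof. by []. Qed.

Lemma all_iota1 (P : pred nat) m : all P (iota 1 m) = all (fun i => P i.+1) (iota 0 m).
Proof. by rewrite -[1]addn0 iotaDl all_map. Qed.

Lemma walk_fromE j k t w ws ts :
  walk_from j k (Some t) w ws ts =
  [&& size (w :: ws) == (size ts).+1, 0 < size ts, head 0 ts == t,
      all (fun i => passage_ok j k (nth 0 ts i) (nth 0 (w :: ws) i) (nth 0 (w :: ws) i.+1))
        (iota 0 (size ts)),
      all (fun i => next_node j k (nth 0 (w :: ws) i.+1) (nth 0 ts i) == Some (nth 0 ts i.+1))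
        (iota 0 (size ts).-1),
      next_node j k (last 0 (w :: ws)) (last 0 ts) == None
    & last 0 (w :: ws) == k.+1].
Proof.
elim: ws t w ts => [|w' ws IH] t w [|t' ts] //=.
rewrite all_iota1 /= eqSS; case: eqP => [<-|_]; rewrite ?andbF //=.
case N: (next_node j k w' t') => [t2|].
  rewrite IH; case: ts => [|t3 ts]; first by case: ws {IH} => [|w2 ws]; rewrite /= ?N ?andbF.
  rewrite /= !all_iota1 /= N (_ : (Some t2 == Some t3) = (t3 == t2)).
    by case: (passage_ok j k t' w w'); case: (_ == _); case: (t3 == t2); rewrite ?andbF.
  by apply/eqP/eqP => [[->]|->].
rewrite walk_from_None; case: ws {IH} => [|w2 ws]; case: ts => [|t3 ts]; rewrite /= ?N ?andbF ?andbT //.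
Qed.

Lemma rigorousE nw j k ws ts :
  rigorous nw j (k, ws, ts) =
  [&& 0 < k < nw, uniq ts, head 0 ws == k
    & walk_from j k (bottom_node j k) (head 0 ws) (behead ws) ts].
Proof.
rewrite /rigorous /pk /pws /pts /=; case: ws => [|w0 wo] /=.
  by rewrite andbF; case: k => [|k]; rewrite /= ?andbF ?andFb.
case: (bottom_node j k) => [b|]; last first.
  rewrite walk_from_None /= !andbF; case: (w0 =P k) => [->|]; rewrite ?andbF ?andFb //.
  by rewrite (ltn_eqF (ltnSn k)) !andbF.
rewrite walk_fromE (_ : (Some b == Some (head 0 ts)) = (head 0 ts == b)); last first.
  by apply/eqP/eqP => [[->]|->].
do !bool_congr.
Qed.

Fixpoint switches_rec (j : seq nat) (e w : nat) (ws ts : seq nat) : bool :=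
  match ws, ts with
  | w' :: ws', t :: ts' => ((w != w') && on_node j t e) || switches_rec j e w' ws' ts'
  | _, _ => false
  end.

Lemma switches_rec_cons j e w w' ws t ts : switches_rec j e w (w' :: ws) (t :: ts) =
  ((w != w') && on_node j t e) || switches_rec j e w' ws ts.
Proof. by []. Qed.

Lemma switches_onE j e k w ws ts : size ws = size ts ->
  switches_on j e (k, w :: ws, ts) = switches_rec j e w ws ts.
Proof.
rewrite /switches_on /pws /pts /=.
elim: ts w ws => [|t ts IH] w [|w' ws] //= [sz].
by rewrite -IH // -[1]addn0 iotaDl has_map.
Qed.

Lemma uniq_filter_nth (a : pred nat) s p q : uniq [seq x <- s | a x] ->
  p < q -> q < size s -> nth 0 s p = nth 0 s q -> ~~ a (nth 0 s p).
Proof.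
move=> U pq qs e; apply/negP => ap; move: U.
rewrite -(cat_take_drop q s) filter_cat cat_uniq => /and3P [_ /hasP []].
exists (nth 0 s p).
  rewrite mem_filter ap /=; have -> : nth 0 s p = nth 0 (drop q s) 0 by rewrite nth_drop addn0.
  apply: mem_nth.
  by rewrite size_drop subn_gt0.
by rewrite mem_filter ap /= -(nth_take 0 pq); apply: mem_nth; rewrite size_take qs.
Qed.

Section WalkFacts.
Variables (j : seq nat) (k : nat) (wo ts : seq nat).
Hypothesis walk : walk_from j k (bottom_node j k) k wo ts.

Local Notation W := (k :: wo).

Let walk_start : bottom_node j k = Some (head 0 ts) /\ walk_from j k (Some (head 0 ts)) k wo ts.
Proof.
move: walk; case: (bottom_node j k) => [b|]; last by rewrite walk_from_None => /and3P [_ _ /eqP /n_Sn].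
by move=> wk; have := wk; rewrite walk_fromE => /and4P [_ _ /eqP ->].
Qed.

Let walk_conditions := walk_start.2.

Lemma walk_bottom : bottom_node j k = Some (nth 0 ts 0).
Proof. by rewrite nth0; case: walk_start. Qed.

Lemma walk_size : size wo = size ts.
Proof. by move: walk_conditions; rewrite walk_fromE => /andP [/eqP [->]]. Qed.

Lemma walk_passage i : i < size ts -> passage_ok j k (nth 0 ts i) (nth 0 W i) (nth 0 W i.+1).
Proof.
move: walk_conditions; rewrite walk_fromE => /and4P [_ _ _ /andP [/allP Hp _]] lti.
by apply: Hp; rewrite mem_iota.
Qed.

Lemma walk_next i : i.+1 < size ts ->
  next_node j k (nth 0 W i.+1) (nth 0 ts i) = Some (nth 0 ts i.+1).
Proof.
move: walk_conditions; rewrite walk_fromE => /and4P [_ _ _ /and3P [_ /allP Hn _]] lti.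
by apply/eqP/Hn; rewrite mem_iota; move: lti; case: (size ts).
Qed.

Lemma walk_end : nth 0 W (size ts) = k.+1.
Proof.
move: walk_conditions; rewrite walk_fromE => /and4P [_ _ _ /and4P [_ _ _ /eqP <-]].
by rewrite -walk_size -[size wo]/((size W).-1) nth_last.
Qed.

Lemma walk_on_wire i : i < size ts -> nth 0 ts i \in wire_nodes j (nth 0 W i).
Proof.
case: i => [_|i lti]; first exact: bottom_node_wire walk_bottom.
exact: next_node_wire (walk_next lti).
Qed.

Lemma walk_in_range x : x \in ts -> x < size j.
Proof. by move/(nthP 0) => [i /walk_on_wire + <-]; rewrite mem_wire_nodes => /andP []. Qed.

Lemma walk_leaves_on i : i < size ts -> nth 0 ts i \in wire_nodes j (nth 0 W i.+1).
Proof.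
move=> lti; have := walk_on_wire lti; rewrite !mem_wire_nodes => /andP [-> _].
by case/and3P: (walk_passage lti).
Qed.

(* A path that never switches at a node of [l_e] never travels on [l_e]: it would have to enter it
   from [l_k] or leave it for [l_(k+1)] by switching at such a node. *)
Lemma walk_avoids e : ~~ switches_on j e (k, W, ts) -> forall i, i <= size ts -> nth 0 W i != e.
Proof.
move=> /hasPn nsw.
have same i : i <= size ts -> (nth 0 W i == e) = (k == e).
  elim: i => // i IH lti; rewrite -IH ?(ltnW lti) //.
  have /nsw : i \in iota 0 (size ts) by rewrite mem_iota.
  have /and3P [on_in on_out _] := walk_passage lti.
  rewrite /pws /pts negb_and negbK => /orP [/eqP -> //|off_e].
  have off w : on_node j (nth 0 ts i) w -> (w == e) = false.
    by move=> on_w; apply/negP => /eqP we; rewrite -we on_w in off_e.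
  by rewrite !off.
have ke : k != e.
  apply/negP => /eqP ke; have := same _ (leqnn _).
  by rewrite walk_end ke eqxx (gtn_eqF (ltnSn e)).
by move=> i /same ->.
Qed.

(* If the nodes of [X] lie on [l_e] and the path avoids [l_e], a repeated visit of such a node would
   force a repeated visit of the previous node; hence repetitions are detected outside [X]. *)
Lemma walk_uniq e (X : pred nat) : (forall x, X x -> x < size j -> on_node j x e) ->
  ~~ switches_on j e (k, W, ts) -> uniq [seq x <- ts | ~~ X x] -> uniq ts.
Proof.
move=> HX nsw U; apply/negPn/negP => /(uniqPn 0) [p [q [pq qs]]].
have on_wire i : i < size ts -> nth 0 ts i < size j /\ on_node j (nth 0 ts i) (nth 0 W i).
  by move/walk_on_wire; rewrite mem_wire_nodes => /andP [].
elim: p q pq qs => [|p IH] [|q] // pq qs epq.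
all: have ps := ltn_trans pq qs.
all: have Xp := negbNE (uniq_filter_nth U pq qs epq).
all: have [p_in p_on] := on_wire _ ps; have [_ q_on] := on_wire _ qs; rewrite -epq in q_on.
all: have same_wire := node_wires_eq q_on p_on (HX _ Xp p_in)
       (walk_avoids nsw (ltnW qs)) (walk_avoids nsw (ltnW ps)).
  (* a return to the first node would reach it again moving up along [l_k] *)
  have q_in : nth 0 ts q \in wire_nodes j k.
    by have := walk_leaves_on (ltnW qs); rewrite same_wire.
  apply: (bottom_not_next q_in); last by rewrite walk_bottom epq.
  by have := walk_next qs; rewrite same_wire.
(* otherwise both visits arrive on the same wire, so the previous nodes coincide *)
apply: (IH q pq (ltnW qs)); apply: (next_node_inj (k := k) (w := nth 0 W p.+1) _ _ (walk_next ps)).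
- exact: walk_leaves_on (ltnW ps).
- by rewrite -same_wire; apply: walk_leaves_on (ltnW qs).
- by rewrite -same_wire epq; apply: walk_next qs.
Qed.
End WalkFacts.

(* Wire [l_w] of [G(i)] becomes [l_(shift b + w)] of [G(E_b(s)(i))]. *)
Definition shift (b : bullet) : nat := if b is BA then 1 else 0.

Section Embedding.
Variables (n : nat) (b : bullet) (ji je : seq nat) (X : pred nat) (phi phiinv : nat -> nat).
Hypothesis ji_letters : all (fun a => 0 < a < n) ji.
Hypothesis je_letters : all (fun a => 0 < a < n.+1) je.
Hypothesis phi_mono : forall x y, (phi x < phi y) = (x < y).
Hypothesis phiK : cancel phi phiinv.
Hypothesis phi_notX : forall t, ~~ X (phi t).
Hypothesis phi_size : phi (size ji) = size je.
Hypothesis nonX_nodes : [seq x <- iota 0 (size je) | ~~ X x] = map phi (iota 0 (size ji)).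
Hypothesis phi_nodes : forall t, t < size ji ->
  nodeL je (phi t) = shift b + nodeL ji t /\ nodeR je (phi t) = shift b + nodeR ji t.
Hypothesis X_on_ell : forall x, X x -> x < size je -> on_node je x (ell b n).

Local Notation d := (shift b).
Local Notation e := (ell b n).

Lemma relabel_ell a : 0 < a <= n -> (d + a == e) = false.
Proof. by case: b => /= ?; apply/eqP; lia. Qed.

Lemma on_phi t w : t < size ji -> on_node je (phi t) (d + w) = on_node ji t w.
Proof. by move=> /phi_nodes [L R]; rewrite /on_node L R !eqn_add2l. Qed.

Lemma ell_off_phi t : t < size ji -> on_node je (phi t) e = false.
Proof.
move=> tj; have bnd w : on_node ji t w -> (d + w == e) = false.
  by move=> /(on_node_bounds ji_letters tj); exact: relabel_ell.
by move: tj => /phi_nodes [L R]; rewrite /on_node L R ![e == _]eq_sym !bnd // /on_node eqxx ?orbT.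
Qed.

Lemma on_phi_relabel t a : t < size ji -> on_node je (phi t) a -> a = d + (a - d).
Proof. by move=> /phi_nodes [L R]; rewrite /on_node L R => /orP [] /eqP ->; rewrite addKn. Qed.

Lemma other_phi t w : t < size ji -> other je (phi t) (d + w) = d + other ji t w.
Proof. by move=> /phi_nodes [L R]; rewrite /other L R eqn_add2l; case: ifP. Qed.

Lemma upward_relabel k w : upward (d + k) (d + w) = upward k w.
Proof. exact: leq_add2l. Qed.

Lemma passage_phi k t w w' : t < size ji ->
  passage_ok je (d + k) (phi t) (d + w) (d + w') = passage_ok ji k t w w'.
Proof.
move=> tj; rewrite /passage_ok /straight_ok !on_phi // eqn_add2l other_phi //.
by rewrite !upward_relabel !ltn_add2l.
Qed.

Lemma wire_nodes_phi w : [seq x <- wire_nodes je (d + w) | ~~ X x] = map phi (wire_nodes ji w).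
Proof.
rewrite /wire_nodes -filter_predI (eq_filter (a2 := predI (fun x => on_node je x (d + w)) (predC X))).
  rewrite filter_predI nonX_nodes filter_map; congr map.
  by apply: eq_in_filter => t; rewrite mem_iota /= => /on_phi ->.
by move=> x /=; rewrite andbC.
Qed.

Lemma oriented_phi k w :
  [seq x <- oriented_nodes je (d + k) (d + w) | ~~ X x] = map phi (oriented_nodes ji k w).
Proof.
by rewrite /oriented_nodes upward_relabel; case: ifP => _; rewrite ?filter_rev ?map_rev wire_nodes_phi.
Qed.

Lemma next_phi k w t : skips (next_node je (d + k) (d + w)) X
  (next_node je (d + k) (d + w) (phi t)) (omap phi (next_node ji k w t)).
Proof.
have orient_relabel : orient (d + k) (d + w) = orient k w by rewrite /orient upward_relabel.
apply: (@skips_ext (next_in (orient k w) (oriented_nodes je (d + k) (d + w)))).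
  by move=> x; rewrite next_nodeE orient_relabel.
rewrite next_nodeE [next_node ji _ _ _]next_nodeE orient_relabel -next_in_map; last first.
  by move=> x y; rewrite /orient; case: ifP; rewrite /= phi_mono.
rewrite -oriented_phi; apply: next_in_skips; first exact: orient_irr.
  exact: orient_trans.
by rewrite -orient_relabel; exact: oriented_sorted.
Qed.

(* In particular for the first node of [l_k], since [phi] maps [size ji] to [size je]. *)
Lemma bottom_phi k :
  skips (next_node je (d + k) (d + k)) X (bottom_node je (d + k)) (omap phi (bottom_node ji k)).
Proof. by rewrite !bottom_nodeE -phi_size; apply: next_phi. Qed.

Lemma nonX_wire_node w z : z \in wire_nodes je (d + w) -> ~~ X z ->
  exists2 t, z = phi t & t \in wire_nodes ji w.
Proof.
move=> zw nXz; have : z \in [seq x <- wire_nodes je (d + w) | ~~ X x] by rewrite mem_filter nXz.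
by rewrite wire_nodes_phi => /mapP [t tw ->]; exists t.
Qed.

Definition kept_wires (ts ws : seq nat) : seq nat := map snd [seq p <- zip ts ws | ~~ X p.1].
Definition contract_wires (ts ws : seq nat) : seq nat := map (subn^~ d) (kept_wires ts ws).
Definition contract_nodes (ts : seq nat) : seq nat := map phiinv [seq x <- ts | ~~ X x].

Lemma contract_consX t ts w ws : X t ->
  contract_wires (t :: ts) (w :: ws) = contract_wires ts ws /\
  contract_nodes (t :: ts) = contract_nodes ts.
Proof. by rewrite /contract_wires /contract_nodes /kept_wires /= => ->. Qed.

Lemma contract_cons_phi t ts w ws :
  contract_wires (phi t :: ts) (d + w :: ws) = w :: contract_wires ts ws /\
  contract_nodes (phi t :: ts) = t :: contract_nodes ts.
Proof. by rewrite /contract_wires /contract_nodes /kept_wires /= phi_notX /= addKn phiK. Qed.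

Lemma phi_inj : injective phi.
Proof. exact: can_inj phiK. Qed.

Lemma omap_phiK o : omap phiinv (omap phi o) = o.
Proof. by case: o => //= x; rewrite phiK. Qed.

(* Contracting a walk of [G(je)] that does not switch at nodes of the new wire gives a walk of
   [G(ji)]: at extra nodes the walk goes straight on, at old nodes it does what it did in [G(ji)]. *)
Lemma contract_walk k w o1 o2 ws ts :
  skips (next_node je (d + k) (d + w)) X o1 o2 ->
  (forall z, o1 = Some z -> z \in wire_nodes je (d + w)) ->
  walk_from je (d + k) o1 (d + w) ws ts -> ~~ switches_rec je e (d + w) ws ts ->
  walk_from ji k (omap phiinv o2) w (contract_wires ts ws) (contract_nodes ts).
Proof.
elim: ts w o1 o2 ws => [|t ts IH] w o1 o2 ws R o1_on;
  case: R o1_on => [|z nXz|z o Xz R'] o1_on; try by case: ws.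
-
  rewrite !walk_from_None => /and3P [/eqP -> _]; rewrite -addnS eqn_add2l.
  by move=> ->.
-
  case: ws => [|w' ws] //; rewrite walk_from_cons switches_rec_cons.
  move=> /and3P [/eqP -> pass W] /norP [_ nsw].
  have [u zu uw] := nonX_wire_node (o1_on z erefl) nXz; subst z.
  have uj : u < size ji by move: uw; rewrite mem_wire_nodes => /andP [].
  have [w'' w'E] : exists w'', w' = d + w''.
    by exists (w' - d); apply: on_phi_relabel uj _; case/and3P: pass.
  subst w'; have [-> ->] := contract_cons_phi u ts w'' ws.
  rewrite [omap _ _]/= phiK walk_from_cons eqxx -(passage_phi k) // pass /=.
  rewrite -[next_node ji k w'' u]omap_phiK.
  by apply: IH (next_phi k w'' u) _ W nsw => z /next_node_wire.
- (* an extra node, passed straight since the walk does not switch there *)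
  case: ws => [|w' ws] //; rewrite walk_from_cons switches_rec_cons.
  move=> /and3P [/eqP -> pass W] /norP [sw nsw].
  have zj : z < size je by move: (o1_on z erefl); rewrite mem_wire_nodes => /andP [].
  have w'E : w' = d + w by apply/eqP; move: sw; rewrite X_on_ell // andbT negbK eq_sym.
  subst w'; have [-> ->] := contract_consX ts (d + w) ws Xz.
  by apply: IH R' _ W nsw => z' /next_node_wire.
Qed.

(* Passing an extra node straight is always allowed: the new wire is the extremal one and has the
   orientation which makes the crossing with it harmless. *)
Lemma straight_at_X k x a : 0 < k < n -> X x -> x < size je -> on_node je x a -> a != e ->
  straight_ok je (d + k) a x.
Proof.
move=> kn Xx xj ax ae; rewrite /straight_ok (other_on_node ax (X_on_ell Xx xj) ae).
have := on_node_bounds je_letters xj ax; move: ae; rewrite /upward.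
by case: b kn => /= kn /eqP ae ab; apply/negP; lia.
Qed.

Definition lifted (k w : nat) (o : option nat) (ws ts : seq nat) : Prop :=
  exists ws', exists ts', [/\ walk_from je (d + k) o (d + w) ws' ts',
    ~~ switches_rec je e (d + w) ws' ts', contract_wires ts' ws' = ws & contract_nodes ts' = ts].

Lemma lifted_extra k w z ws ts : 0 < k < n -> 0 < w <= n -> X z -> z \in wire_nodes je (d + w) ->
  lifted k w (next_node je (d + k) (d + w) z) ws ts -> lifted k w (Some z) ws ts.
Proof.
move=> kn wn Xz; rewrite mem_wire_nodes => /andP [zj z_on] [ws1 [ts1 [W1 S1 C1 N1]]].
exists (d + w :: ws1), (z :: ts1); have [-> ->] := contract_consX ts1 (d + w) ws1 Xz.
split => //; last by rewrite switches_rec_cons eqxx /= S1.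
rewrite walk_from_cons eqxx W1 andbT /passage_ok z_on eqxx /=.
by apply: straight_at_X; rewrite ?relabel_ell.
Qed.

Lemma lifted_old k w t w' ws ts : t < size ji -> passage_ok ji k t w w' ->
  lifted k w' (next_node je (d + k) (d + w') (phi t)) ws ts ->
  lifted k w (Some (phi t)) (w' :: ws) (t :: ts).
Proof.
move=> tj pass [ws1 [ts1 [W1 S1 C1 N1]]].
exists (d + w' :: ws1), (phi t :: ts1); have [-> ->] := contract_cons_phi t ts1 w' ws1.
split; [|by rewrite switches_rec_cons ell_off_phi // andbF S1|by rewrite C1|by rewrite N1].
by rewrite walk_from_cons eqxx passage_phi // pass W1.
Qed.

(* Conversely every walk of [G(ji)] lifts: follow it, inserting the extra nodes met on the way. *)
Lemma lift_walk k w o2 ws ts : 0 < k < n -> 0 < w <= n -> walk_from ji k o2 w ws ts ->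
  forall o1, skips (next_node je (d + k) (d + w)) X o1 (omap phi o2) ->
  (forall z, o1 = Some z -> z \in wire_nodes je (d + w)) -> lifted k w o1 ws ts.
Proof.
move=> kn; elim: ts w o2 ws => [|t ts IH] w o2 ws wn Wi o1 R; move E: (omap phi o2) R => o2' R.
all: elim: R o2 E Wi => [|z nXz|z o Xz R' IHR] o2 E Wi o1_on.
all: try (apply: lifted_extra => //; [exact: o1_on|by apply: (IHR o2 E Wi) => z' /next_node_wire]).
- case: o2 E Wi => // _; rewrite walk_from_None => /and3P [/eqP -> _ /eqP ->].
  by exists [::], [::]; rewrite /= -addnS eqxx.
- by case: o2 E Wi => // ? _; case: ws.
- by case: o2 E Wi => // _; rewrite walk_from_None => /and3P [].
case: o2 E Wi => // t0 [ez]; subst z; case: ws => [|w' ws] //; rewrite walk_from_cons.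
move=> /and3P [/eqP -> pass W].
have t0j : t0 < size ji.
  have [t1 /phi_inj ->] := nonX_wire_node (o1_on _ erefl) nXz.
  by rewrite mem_wire_nodes => /andP [].
have w'n : 0 < w' <= n by apply: on_node_bounds ji_letters t0j _; case/and3P: pass.
by apply: lifted_old => //; apply: IH w'n W _ (next_phi k w' t0) _ => z /next_node_wire.
Qed.

Lemma contract_walk_inj k w o ws1 ts1 ws2 ts2 :
  (forall z, o = Some z -> z \in wire_nodes je (d + w)) ->
  walk_from je (d + k) o (d + w) ws1 ts1 -> walk_from je (d + k) o (d + w) ws2 ts2 ->
  ~~ switches_rec je e (d + w) ws1 ts1 -> ~~ switches_rec je e (d + w) ws2 ts2 ->
  contract_wires ts1 ws1 = contract_wires ts2 ws2 -> contract_nodes ts1 = contract_nodes ts2 ->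
  ws1 = ws2 /\ ts1 = ts2.
Proof.
elim: ts1 w o ws1 ts2 ws2 => [|t1 ts1 IH] w [z|] ws1 ts2 ws2 o_on; rewrite ?walk_from_None.
- by case: ws1.
- by case/and3P => /eqP -> /eqP -> _ /and3P [/eqP -> /eqP ->].
- case: ws1 ts2 ws2 => [|w1 ws1] // [|t2 ts2] [|w2 ws2] //; rewrite !walk_from_cons !switches_rec_cons.
  move=> /and3P [/eqP -> P1 W1] /and3P [/eqP -> P2 W2] /norP [sw1 nsw1] /norP [sw2 nsw2].
  have zj : z < size je by move: (o_on z erefl); rewrite mem_wire_nodes => /andP [].
  case Xz: (X z).
    (* at an extra node both walks stay on their wire *)
    move: sw1 sw2; rewrite X_on_ell // !andbT !negbK => /eqP w1E /eqP w2E; subst w1 w2.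
    have [-> ->] := contract_consX ts1 (d + w) ws1 Xz.
    have [-> ->] := contract_consX ts2 (d + w) ws2 Xz.
    move=> C N.
    by have [-> ->] := IH _ _ _ _ _ (fun z' => @next_node_wire _ _ _ _ _) W1 W2 nsw1 nsw2 C N.
  (* at an old node the wire left on is recorded by the contraction *)
  have [u zu uw] := nonX_wire_node (o_on z erefl) (negbT Xz); subst z.
  have uj : u < size ji by move: uw; rewrite mem_wire_nodes => /andP [].
  have relabel w' : passage_ok je (d + k) (phi u) (d + w) w' -> w' = d + (w' - d).
    by case/and3P => _ on_w' _; apply: on_phi_relabel uj on_w'.
  rewrite (relabel _ P1) (relabel _ P2) in W1 W2 nsw1 nsw2 *.
  have [-> ->] := contract_cons_phi u ts1 (w1 - d) ws1.
  have [-> ->] := contract_cons_phi u ts2 (w2 - d) ws2.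
  move=> [v12 C] [N]; rewrite v12 in W1 nsw1 *.
  by have [-> ->] := IH _ _ _ _ _ (fun z' => @next_node_wire _ _ _ _ _) W1 W2 nsw1 nsw2 C N.
- by case/and3P.
Qed.

Lemma start_relabel k' : 0 < k' < n.+1 -> k' != e -> k'.+1 != e ->
  exists2 k, 0 < k < n & k' = d + k.
Proof. by case: b => /= k'n /eqP k'e /eqP k'1e; [exists k'|exists k'.-1]; lia. Qed.

Lemma start_bounds k : 0 < k < n -> 0 < d + k < n.+1.
Proof. by case: b => /=; lia. Qed.

Lemma nonswitching_shape Q : rigorous n.+1 je Q -> ~~ switches_on je e Q ->
  exists k, exists wo, [/\ 0 < k < n, Q = (d + k, d + k :: wo, pts Q),
    walk_from je (d + k) (bottom_node je (d + k)) (d + k) wo (pts Q)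
  & ~~ switches_rec je e (d + k) wo (pts Q)].
Proof.
case: Q => [[k' ws] ts]; rewrite rigorousE /pts /= => /and4P [kn _ /eqP hw W] nsw.
case: ws hw W nsw => [|w0 wo] /= hw; first by move: kn; rewrite -hw.
subst w0 => W nsw; have avoid := walk_avoids W nsw.
have k1e : k'.+1 != e by have := avoid (size ts) (leqnn _); rewrite (walk_end W).
have [k kn' ek] := start_relabel kn (avoid 0 (leq0n _)) k1e; subst k'.
by exists k, wo; split => //; move: nsw; rewrite switches_onE // (walk_size W).
Qed.

Definition contract (Q : path_data) : path_data :=
  (pk Q - d, (head 0 (pws Q) - d) :: contract_wires (pts Q) (behead (pws Q)), contract_nodes (pts Q)).

Lemma phiinv_inj_in : {in [pred x | ~~ X x & x < size je] &, injective phiinv}.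
Proof.
have img x : ~~ X x -> x < size je -> exists t, x = phi t.
  move=> nXx xj; have : x \in [seq x <- iota 0 (size je) | ~~ X x] by rewrite mem_filter nXx mem_iota.
  by rewrite nonX_nodes => /mapP [t _ ->]; exists t.
move=> x y /andP [nXx xj] /andP [nXy yj].
by have [t ->] := img x nXx xj; have [u ->] := img y nXy yj; rewrite !phiK => ->.
Qed.

Lemma uniq_contract_nodes ts : {in ts, forall x, x < size je} ->
  uniq (contract_nodes ts) = uniq [seq x <- ts | ~~ X x].
Proof.
move=> ts_je; apply: map_inj_in_uniq => x y.
rewrite !mem_filter => /andP [nXx /ts_je xj] /andP [nXy /ts_je yj].
by apply: phiinv_inj_in; rewrite inE ?nXx ?nXy.
Qed.

Lemma contract_rigorous Q : rigorous n.+1 je Q -> ~~ switches_on je e Q -> rigorous n ji (contract Q).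
Proof.
move=> RQ nsw; have [k [wo [kn QE W nswr]]] := nonswitching_shape RQ nsw.
move: RQ; rewrite QE rigorousE /contract /pk /pws /pts /= => /and4P [_ U _ _].
rewrite rigorousE /= addKn kn eqxx /=; apply/andP; split.
  by rewrite uniq_contract_nodes ?filter_uniq // => x /(walk_in_range W).
rewrite -[bottom_node ji k]omap_phiK.
by apply: contract_walk (bottom_phi k) _ W nswr => z /bottom_node_wire.
Qed.

Lemma lift_rigorous P : rigorous n ji P ->
  exists Q, [&& rigorous n.+1 je Q, ~~ switches_on je e Q & contract Q == P].
Proof.
case: P => [[k ws] ts]; rewrite rigorousE => /and4P [kn U /eqP hw W].
case: ws hw W => [|w0 wo] /= hw; first by move: kn; rewrite -hw.
subst w0 => W; have kn' : 0 < k <= n by case/andP: kn => -> /ltnW.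
have [ws1 [ts1 [W1 S1 C1 N1]]] :=
  lift_walk kn kn' W (bottom_phi k) (fun z => @bottom_node_wire _ _ z).
have nsw : ~~ switches_on je e (d + k, d + k :: ws1, ts1) by rewrite switches_onE // (walk_size W1).
exists (d + k, d + k :: ws1, ts1); rewrite nsw /contract /pk /pws /pts /= addKn C1 N1 eqxx !andbT.
rewrite rigorousE /= start_bounds // eqxx W1 !andbT /=.
apply: (walk_uniq W1 X_on_ell nsw).
by rewrite -uniq_contract_nodes ?N1 // => x /(walk_in_range W1).
Qed.

Lemma contract_inj Q1 Q2 : rigorous n.+1 je Q1 -> ~~ switches_on je e Q1 ->
  rigorous n.+1 je Q2 -> ~~ switches_on je e Q2 -> contract Q1 = contract Q2 -> Q1 = Q2.
Proof.
move=> R1 nsw1 R2 nsw2.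
have [k1 [wo1 [_ E1 W1 S1]]] := nonswitching_shape R1 nsw1.
have [k2 [wo2 [_ E2 W2 S2]]] := nonswitching_shape R2 nsw2.
rewrite /pts in E1 E2 W1 W2 S1 S2.
rewrite E1 E2 /contract /pk /pws /pts /= !addKn => -[ek _ C N]; subst k2.
by have [-> ->] := contract_walk_inj (fun z => @bottom_node_wire _ _ z) W1 W2 S1 S2 C N.
Qed.

Theorem embedding_paths : exists f : GP n ji -> GP n.+1 je, injective f /\
  forall Q : GP n.+1 je, (exists P, f P = Q) <-> ~~ switches_on je e (val Q).
Proof.
pose lifts (P Q : path_data) := [&& rigorous n.+1 je Q, ~~ switches_on je e Q & contract Q == P].
have lift_ex (P : GP n ji) : exists Q, lifts (val P) Q by exact: lift_rigorous (valP P).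
pose f (P : GP n ji) := xchoose (lift_ex P).
have f_lifts P : lifts (val P) (f P) := xchooseP (lift_ex P).
have f_rig P : rigorous n.+1 je (f P) by case/and3P: (f_lifts P).
exists (fun P => exist _ (f P) (f_rig P)); split.
  move=> P1 P2 /(congr1 val) /= E; apply: val_inj.
  by case/and3P: (f_lifts P1) => _ _ /eqP <-; case/and3P: (f_lifts P2) => _ _ /eqP <-; rewrite E.
move=> Q; split; first by move=> [P <-] /=; case/and3P: (f_lifts P).
move=> nsw; exists (exist _ (contract (val Q)) (contract_rigorous (valP Q) nsw)); apply: val_inj => /=.
have /and3P [R nswf /eqP cf] := f_lifts (exist _ (contract (val Q)) (contract_rigorous (valP Q) nsw)).
exact: contract_inj R nswf (valP Q) nsw cf.
Qed.

End Embedding.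

Lemma nodeLE j t : nodeL j t = wire_after (take t j) (nth 0 j t).
Proof. by []. Qed.

Lemma nodeRE j t : nodeR j t = wire_after (take t j) (nth 0 j t).+1.
Proof. by []. Qed.

Lemma wire_after_shift l q : wire_after (map S l) q.+1 = (wire_after l q).+1.
Proof. by elim: l => //= a l ->; rewrite /sw !eqSS; case: ifP => //; case: ifP. Qed.

Lemma wire_after_fix l p : all (fun a => (p != a) && (p != a.+1)) l -> wire_after l p = p.
Proof. by elim: l => //= a l IH /andP [/andP [/negbTE pa /negbTE pa1] /IH ->]; rewrite /sw pa pa1. Qed.

Lemma wire_after_iota a m v : a <= v < a + m -> wire_after (iota a m) v = v.+1.
Proof.
elim: m a => [|m IH] a hv; first lia.
rewrite /=; case: (v =P a) => [->|ne].
  rewrite wire_after_fix; first by rewrite /sw eqxx.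
  by apply/allP => x; rewrite mem_iota => hx; apply/andP; split; apply/eqP; lia.
rewrite IH; last lia.
by rewrite /sw; case: eqP => [|_]; [lia|]; case: eqP => [|_] //; lia.
Qed.

Lemma wire_after_iota_top a m : wire_after (iota a m) (a + m) = a.
Proof.
elim: m a => [|m IH] a; first by rewrite addn0.
by rewrite /= -addSnnS IH /sw eqn_leq ltnn /= eqxx.
Qed.

Lemma wire_after_rev l p : wire_after (rev l) p = foldl (fun q a => sw a q) p l.
Proof. by rewrite -[in RHS](revK l) foldl_rev. Qed.

Lemma wire_after_rev_iota a m v : a < v <= a + m -> wire_after (rev (iota a m)) v = v.-1.
Proof.
rewrite wire_after_rev; elim: m a v => [|m IH] a v hv; first lia.
rewrite /=; case: (v =P a.+1) => [->|ne].
  rewrite /sw eqxx (_ : (a.+1 == a) = false); last by apply/eqP; lia.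
  rewrite -wire_after_rev wire_after_fix //.
  by apply/allP => x; rewrite mem_rev mem_iota => hx; apply/andP; split; apply/eqP; lia.
rewrite (_ : sw a v = v); last by rewrite /sw; case: eqP => [|_]; [lia|]; case: eqP => //; lia.
by rewrite IH //; lia.
Qed.

Lemma wire_after_rev_iota_bot a m : wire_after (rev (iota a m)) a = a + m.
Proof.
rewrite wire_after_rev; elim: m a => [|m IH] a; first by rewrite addn0.
by rewrite /= {2}/sw eqxx IH addSnnS.
Qed.

Lemma take_rev_iota n c : c <= n -> take c (rev (iota 1 n)) = rev (iota (n - c).+1 c).
Proof.
move=> cn; rewrite (_ : n = (n - c) + c) ?subnKC //; last lia.
rewrite iotaD rev_cat (_ : n - c + c - c = n - c); last lia.
by rewrite add1n take_size_cat // size_rev size_iota.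
Qed.

Lemma nth_rev_iota n c : c < n -> nth 0 (rev (iota 1 n)) c = n - c.
Proof. by move=> cn; rewrite nth_rev size_iota // nth_iota; lia. Qed.

Lemma take_cat_add (A R : seq nat) k : take (size A + k) (A ++ R) = A ++ take k R.
Proof. by rewrite take_cat ltnNge leq_addr /= addKn. Qed.

Lemma nth_cat_add (A R : seq nat) k : nth 0 (A ++ R) (size A + k) = nth 0 R k.
Proof. by rewrite nth_cat ltnNge leq_addr /= addKn. Qed.

Lemma all_take (P : pred nat) k l : all P l -> all P (take k l).
Proof. by rewrite -{1}(cat_take_drop k l) all_cat => /andP []. Qed.

Lemma all_drop (P : pred nat) k l : all P l -> all P (drop k l).
Proof. by rewrite -{1}(cat_take_drop k l) all_cat => /andP []. Qed.

(* Inserting a block of [m] nodes after the first [a]: old node [t] becomes [skip_block t]. *)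
Section Block.
Variables (a m : nat).

Definition skip_block (t : nat) : nat := if t < a then t else t + m.
Definition unskip_block (x : nat) : nat := if x < a then x else x - m.
Definition in_block : pred nat := fun x => a <= x < a + m.

Lemma skip_block_mono x y : (skip_block x < skip_block y) = (x < y).
Proof. by rewrite /skip_block; case: ifP; case: ifP; lia. Qed.

Lemma skip_blockK : cancel skip_block unskip_block.
Proof. by move=> t; rewrite /unskip_block /skip_block; case: (ltnP t a) => h //; case: ifP; lia. Qed.

Lemma skip_block_out t : ~~ in_block (skip_block t).
Proof. by rewrite /in_block /skip_block; case: ifP; lia. Qed.

Lemma outside_block s : [seq x <- iota 0 (a + m + s) | ~~ in_block x] = map skip_block (iota 0 (a + s)).
Proof.
rewrite !iotaD !filter_cat map_cat !add0n.
have -> : [seq x <- iota 0 a | ~~ in_block x] = iota 0 a.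
  by apply/all_filterP/allP => x; rewrite mem_iota /in_block /=; lia.
have -> : [seq x <- iota a m | ~~ in_block x] = [::].
  by rewrite -(filter_pred0 (iota a m)); apply: eq_in_filter => x; rewrite mem_iota /in_block /=; lia.
have -> : [seq x <- iota (a + m) s | ~~ in_block x] = iota (a + m) s.
  by apply/all_filterP/allP => x; rewrite mem_iota /in_block /=; lia.
have -> : map skip_block (iota 0 a) = iota 0 a.
  by rewrite -[RHS]map_id; apply/eq_in_map => x; rewrite mem_iota /skip_block; case: ifP; lia.
have -> : map skip_block (iota a s) = iota (a + m) s.
  by rewrite (addnC a m) iotaDl; apply/eq_in_map => x; rewrite mem_iota /skip_block; case: ifP; lia.
by rewrite cats0.
Qed.

End Block.

(* The extension words, with [A] the first [M - s] letters of [i] and [B] the remaining ones. *)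
Section Extension.
Variables (n : nat) (A B : seq nat).
Hypothesis A_letters : all (fun x => 0 < x < n) A.
Hypothesis B_letters : all (fun x => 0 < x < n) B.

Definition ext_word (b : bullet) : seq nat :=
  match b with
  | BD => A ++ rev (iota 1 n) ++ map S B
  | BA => map S A ++ iota 1 n ++ B
  end.

Local Notation phi := (skip_block (size A) n).

Lemma size_ext_word b : size (ext_word b) = size A + n + size B.
Proof. by case: b; rewrite /= !size_cat ?size_map ?size_rev size_iota addnA. Qed.

Lemma ext_word_letters b : all (fun x => 0 < x < n.+1) (ext_word b).
Proof.
have up l : all (fun x => 0 < x < n) l -> all (fun x => 0 < x < n.+1) l.
  by apply: sub_all => x /=; lia.
have upS l : all (fun x => 0 < x < n) l -> all (fun x => 0 < x < n.+1) (map S l).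
  by rewrite all_map; apply: sub_all => x /=; lia.
have I_letters : all (fun x => 0 < x < n.+1) (iota 1 n) by apply/allP => x; rewrite mem_iota; lia.
by case: b; rewrite /= !all_cat ?all_rev I_letters ?(up _ A_letters) ?(up _ B_letters)
  ?(upS _ A_letters) ?(upS _ B_letters).
Qed.

Lemma block_word_D v : 0 < v <= n -> wire_after (rev (iota 1 n)) v.+1 = v.
Proof. by move=> vn; rewrite wire_after_rev_iota //; lia. Qed.

Lemma block_word_A v : 0 < v <= n -> wire_after (iota 1 n) v = v.+1.
Proof. by move=> vn; rewrite wire_after_iota //; lia. Qed.

Lemma ext_word_nodes b t : t < size (A ++ B) ->
  nodeL (ext_word b) (phi t) = shift b + nodeL (A ++ B) t /\
  nodeR (ext_word b) (phi t) = shift b + nodeR (A ++ B) t.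
Proof.
rewrite size_cat /skip_block !nodeLE !nodeRE => ht; case: (ltnP t (size A)) => hta.
  case: b; rewrite /= !take_cat !nth_cat ?size_map hta // -map_take (nth_map 0) //.
  by rewrite !wire_after_shift.
have [c ec] : exists c, t = size A + c by exists (t - size A); lia.
subst t; have hc : c < size B by lia.
have /andP [Bc0 Bcn] : 0 < nth 0 B c < n := allP B_letters _ (mem_nth 0 hc).
have v_bnd p : 0 < p <= n -> 0 < wire_after (take c B) p <= n.
  exact: wire_through_bounds (all_take c B_letters).
rewrite !(take_cat_add A) !(nth_cat_add A) !foldr_cat.
case: b => /=.
- rewrite (_ : size A + c + n = size A + (size (rev (iota 1 n)) + c)); last first.
    by rewrite size_rev size_iota; lia.
  rewrite !(take_cat_add A) (take_cat_add (rev _)) !(nth_cat_add A) (nth_cat_add (rev _)).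
  by rewrite -map_take (nth_map 0) // !foldr_cat !wire_after_shift !block_word_D ?v_bnd //; lia.
- rewrite (_ : size A + c + n = size (map S A) + (size (iota 1 n) + c)); last first.
    by rewrite size_map size_iota; lia.
  rewrite !(take_cat_add (map S A)) (take_cat_add (iota 1 n)).
  rewrite !(nth_cat_add (map S A)) (nth_cat_add (iota 1 n)).
  by rewrite !foldr_cat !block_word_A ?v_bnd ?wire_after_shift //; lia.
Qed.

Lemma ext_word_block b c : c < n -> on_node (ext_word b) (size A + c) (ell b n).
Proof.
move=> cn; have A_fix p : n < p -> wire_after A p = p.
  by move=> np; apply: wire_after_fix; apply/allP => x /(allP A_letters) /=; lia.
rewrite /on_node; case: b => /=; apply/orP; [right|left]; apply/eqP.
- rewrite nodeRE take_cat_add nth_cat_add take_cat nth_cat size_rev size_iota cn.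
  rewrite nth_rev_iota // take_rev_iota ?(ltnW cn) // foldr_cat.
  by rewrite wire_after_rev_iota_bot (_ : (n - c).+1 + c = n.+1) ?A_fix //; lia.
- rewrite nodeLE -(size_map S A) take_cat_add nth_cat_add take_cat nth_cat size_iota cn.
  rewrite nth_iota // take_iota (_ : minn c n = c) ?foldr_cat ?add1n; last lia.
  rewrite (wire_after_iota_top 1 c) wire_after_fix //.
  by rewrite all_map; apply/allP => x /(allP A_letters) /=; lia.
Qed.

Theorem extension_paths b : exists f : GP n (A ++ B) -> GP n.+1 (ext_word b), injective f /\
  forall Q : GP n.+1 (ext_word b),
    (exists P, f P = Q) <-> ~~ switches_on (ext_word b) (ell b n) (val Q).
Proof.
apply: (@embedding_paths n b (A ++ B) (ext_word b) (in_block (size A) n) phi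
  (unskip_block (size A) n)).
- by rewrite all_cat A_letters B_letters.
- exact: ext_word_letters.
- exact: skip_block_mono.
- exact: skip_blockK.
- exact: skip_block_out.
- by rewrite size_cat size_ext_word /skip_block ltnNge leq_addr /=; lia.
- by rewrite size_ext_word size_cat outside_block.
- exact: ext_word_nodes.
- move=> x /andP [lo hi] _; have -> : x = size A + (x - size A) by lia.
  by apply: ext_word_block; lia.
Qed.
End Extension.

(* The main theorem: only the bound on the letters of [i] contained in [Sigma n i] is needed. *)
Theorem mainTheorem10 (n : nat) (i : seq nat) (s : nat) (b : bullet) :
  2 <= n -> Sigma n i -> s <= (n * n.-1) %/ 2 ->
  exists f : GP n i -> GP n.+1 (ext b n s i),
    injective f /\
    forall Q : GP n.+1 (ext b n s i),
      (exists P : GP n i, f P = Q) <-> ~~ switches_on (ext b n s i) (ell b n) (val Q).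
Proof.
move=> _ /and3P [_ i_letters _] _.
set A := take (size i - s) i; set B := drop (size i - s) i.
have -> : ext b n s i = ext_word n A B b by case: b.
have := extension_paths (all_take (size i - s) i_letters) (all_drop (size i - s) i_letters) b.
by rewrite cat_take_drop.
Qed.
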